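(* The On-CT-RSD mechanism is not universally friendship-truthful: there is an instance (with friendship graph of maximum degree $1$) and a realization of the mechanism's random choices under which some agent obtains strictly higher utility by declaring as her friend an agent who is not her friend than by reporting truthfully.
   Context: Instance: agents $N$, $n=|N|$ plots $\mathcal V$, undirected plot graph $(\mathcal V,\mathcal E)$, valuations $u_i:\mathcal V\to[0,1]\cap\mathbb Q$, reciprocal directed friendship relation $F$ with weights $\phi_{i,j}\ge0$. For an allocation (bijection) $A:N\to\mathcal V$, $U_i(A)=u_i(A(i))+\sum_{(i,j)\in F}\phi_{i,j}\mathbb I(\{A(i),A(j)\}\in\mathcal E)$. On-CT-RSD: repeatedly a uniformly random agent among those who have not yet picked is selected; she picks an available plot and may declare another not-yet-picked agent as her friend, in which case that agent picks an available plot next (without declaring a friend); this continues until all agents have plots; agents choose plots to maximize their utility. A randomized mechanism is universally friendship-truthful if, for every choice of its random bits (even if known to the agents), no agent can increase her utility by misreporting friendship information, regardless of what other agents report and which plots they pick. *)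

(* Agents and plots are both indexed by 'I_n
   (an allocation is a bijection N -> V, so |V| = |N| = n). *)
From mathcomp Require Import all_boot all_order all_algebra.
Set Implicit Arguments. Unset Strict Implicit. Unset Printing Implicit Defensive.
Import Order.TTheory GRing.Theory Num.Theory.
Local Open Scope ring_scope.

(* An instance: plot graph [edge] (undirected), valuations [val i p] = u_i(p)
   in [0,1] ∩ Q, reciprocal friendship relation [friend] with weights
   [phi i j] = phi_{i,j} >= 0. *)
Record instance (n : nat) := Instance {
  edge : rel 'I_n;
  val : 'I_n -> 'I_n -> rat;
  friend : rel 'I_n;
  phi : 'I_n -> 'I_n -> rat;
  edge_sym : symmetric edge;
  val_bounds : forall i p, 0 <= val i p <= 1;
  friend_sym : symmetric friend;
  friend_irr : irreflexive friend;
  phi_ge0 : forall i j, 0 <= phi i j }.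

Definition max_deg1 n (I : instance n) : Prop :=
  (forall i j k, friend I i j -> friend I i k -> j = k) /\
  (exists i j, friend I i j).

Definition U n (I : instance n) (A : {ffun 'I_n -> 'I_n}) (i : 'I_n) : rat :=
  val I i (A i) + \sum_(j | friend I i j) phi I i j * (edge I (A i) (A j))%:R.

(* Partial allocation during the mechanism: agent -> plot if already picked. *)
Definition state n := {ffun 'I_n -> option 'I_n}.

Definition available n (s : state n) (p : 'I_n) : bool :=
  [forall k, s k != Some p].

Definition assign n (s : state n) (i p : 'I_n) : state n :=
  [ffun k => if k == i then Some p else s k].

(* Behaviour (strategy) of one agent: given the current partial allocation and
   whether she may declare a friend, return the plot she picks and the agent
   (if any) she declares as her friend. *)
Definition strat n := state n -> bool -> 'I_n * option 'I_n.
Definition profile n := 'I_n -> strat n.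

Definition upd n (beh : profile n) (i : 'I_n) (b : strat n) : profile n :=
  fun k => if k == i then b else beh k.

Definition valid_decl n (s : state n) (i : 'I_n) (d : option 'I_n) : bool :=
  if d is Some j then (j != i) && (s j == None) else true.

(* On-CT-RSD with a fixed realization of its random bits, given as a priority
   order [ord] (a permutation of the agents): whenever a random not-yet-picked
   agent must be selected, the first not-yet-picked agent of [ord] is chosen.
   [pend] is the agent declared as friend in the previous step, who picks next
   (without declaring).  An invalid move (unavailable plot, invalid
   declaration) makes the run fail ([None]). *)
Fixpoint run_aux n (ord : seq 'I_n) (beh : profile n) (fuel : nat)
  (s : state n) (pend : option 'I_n) : option (state n) :=
  match fuel with
  | 0 => Some s
  | f.+1 =>
    match pend with
    | Some j =>
        let p := (beh j s false).1 in
        if (s j == None) && available s p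
        then run_aux ord beh f (assign s j p) None else None
    | None =>
        match ohead [seq k <- ord | s k == None] with
        | None => Some s
        | Some i =>
            let p := (beh i s true).1 in
            let d := (beh i s true).2 in
            if available s p && valid_decl s i d
            then run_aux ord beh f (assign s i p) d else None
        end
    end
  end.

Definition complete n (s : state n) : option {ffun 'I_n -> 'I_n} :=
  if [forall k, s k != None] then Some [ffun k => odflt k (s k)] else None.

Definition outcome n (ord : seq 'I_n) (beh : profile n) : option {ffun 'I_n -> 'I_n} :=
  obind (@complete n) (run_aux ord beh n [ffun => None] None).

Definition truthful n (I : instance n) (i : 'I_n) (b : strat n) : Prop :=
  forall (s : state n) (j : 'I_n), (b s true).2 = Some j -> friend I i j.

(* Myopic utility of agent j placing herself on p given the partial allocation. *)
Definition score n (I : instance n) (s : state n) (j p : 'I_n) : rat :=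
  val I j p + \sum_(k | friend I j k)
     phi I j k * (if s k is Some q then (edge I p q)%:R else 0).

Definition greedy n (I : instance n) (j : 'I_n) (b : strat n) : Prop :=
  forall (s : state n) (d : bool), s j = None ->
    available s (b s d).1 /\
    forall q, available s q -> score I s j q <= score I s j (b s d).1.

(** Agent 0 is friends with agent 1 only; she values
    plot 0 and, with weight 1, being adjacent to agent 1, where plots 0 and 1 form
    the only edge.  Agents 1 and 2 both want plot 2, agent 3 is indifferent; they
    pick greedily (plot 2, else 1, else 0, else 3) and never declare.  Agent 0 is
    drawn first.  If she reports truthfully, agent 1 either picks right after her or
    is drawn next, and then takes plot 2 unless agent 0 took it herself, so agent 0
    never both sits on plot 0 and is adjacent to agent 1: her utility is at most 1.
    Taking plot 0 and declaring the non-friend agent 2 makes agent 2 take plot 2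
    first, which pushes agent 1 onto plot 1: utility 2.  Since agent 0 moves only
    once, a strategy of hers matters only through its opening move, so the truthful
    side reduces to finitely many runs of the mechanism. *)
From mathcomp Require Import all_boot all_order all_algebra zify.
Set Implicit Arguments. Unset Strict Implicit. Unset Printing Implicit Defensive.
Import Order.TTheory GRing.Theory Num.Theory.
Local Open Scope ring_scope.

Section Mechanism.

Variable n : nat.
Implicit Types (s : state n) (beh : profile n) (ord : seq 'I_n).

Lemma exists_available s j : s j = None -> exists p, available s p.
Proof.
move=> sj; apply/existsP; apply: contraT; rewrite negb_exists => /forallP none_av.
have surj : [set: option 'I_n] \subset s @: 'I_n.
  apply/subsetP => -[p|] _; last by rewrite -sj imset_f.
  move: (none_av p); rewrite negb_forall => /existsP [k].
  by rewrite negbK => /eqP <-; apply: imset_f.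
have := leq_trans (subset_leq_card surj) (leq_imset_card _ _).
by rewrite cardsT card_option ltnn.
Qed.

Lemma run_aux0 ord beh s pend : run_aux ord beh 0 s pend = Some s.
Proof. by []. Qed.

Lemma run_aux_pend ord beh fuel s j :
  run_aux ord beh fuel.+1 s (Some j) =
  if (s j == None) && available s (beh j s false).1
  then run_aux ord beh fuel (assign s j (beh j s false).1) None else None.
Proof. by []. Qed.

Lemma run_aux_draw ord beh fuel s :
  run_aux ord beh fuel.+1 s None =
  if ohead [seq k <- ord | s k == None] is Some i then
    if available s (beh i s true).1 && valid_decl s i (beh i s true).2
    then run_aux ord beh fuel (assign s i (beh i s true).1) (beh i s true).2
    else None
  else Some s.
Proof. by []. Qed.

Lemma assignE s i p k : assign s i p k = if k == i then Some p else s k.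
Proof. exact: ffunE. Qed.

Lemma availableE s p : available s p = all (fun k => s k != Some p) (enum 'I_n).
Proof. by apply/forallP/allP => [av k _ | av k]; [exact: av | apply: av; rewrite mem_enum]. Qed.

Lemma completeE s : complete s =
  if all (fun k => s k != None) (enum 'I_n) then Some [ffun k => odflt k (s k)] else None.
Proof.
rewrite /complete; congr (if _ then _ else _).
by apply/forallP/allP => [all_s k _ | all_s k]; [exact: all_s | apply: all_s; rewrite mem_enum].
Qed.

Lemma run_aux_upd_picked ord beh i (b b' : strat n) fuel s pend : s i != None ->
  run_aux ord (upd beh i b) fuel s pend = run_aux ord (upd beh i b') fuel s pend.
Proof.
have assign_other s' k p : k != i -> assign s' k p i = s' i.
  by move=> ki; rewrite assignE eq_sym (negbTE ki).
elim: fuel s pend => [//|f IH] s [j|] si /=.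
  case: (j =P i) => [->|/eqP ji]; first by rewrite (negbTE si).
  by rewrite /upd (negbTE ji); case: ifP => // _; apply: IH; rewrite assign_other.
case E: [seq k <- ord | s k == None] => [//|k l] /=.
have : k \in [seq k <- ord | s k == None] by rewrite E mem_head.
rewrite mem_filter => /andP [sk _].
have ki : k != i by apply: contraTneq sk => ->.
by rewrite /upd (negbTE ki); case: ifP => // _; apply: IH; rewrite assign_other.
Qed.

Lemma outcome_upd_first ord beh i (b b' : strat n) : ohead ord = Some i ->
  b [ffun=> None] true = b' [ffun=> None] true ->
  outcome ord (upd beh i b) = outcome ord (upd beh i b').
Proof.
move=> ord_i same_move.
suff run_eq fuel : run_aux ord (upd beh i b) fuel [ffun=> None] None =
                   run_aux ord (upd beh i b') fuel [ffun=> None] None.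
  by rewrite /outcome run_eq.
have unpicked0 : [seq k <- ord | [ffun=> None] k == None :> option 'I_n] = ord.
  by rewrite (eq_filter (a2 := predT)) ?filter_predT // => k; rewrite ffunE.
case: fuel => [//|f] /=.
rewrite unpicked0 ord_i /upd eqxx same_move; case: ifP => // _.
by apply: run_aux_upd_picked; rewrite assignE eqxx.
Qed.

End Mechanism.

Definition a0 : 'I_4 := @Ordinal 4 0 isT.
Definition a1 : 'I_4 := @Ordinal 4 1 isT.
Definition a2 : 'I_4 := @Ordinal 4 2 isT.
Definition a3 : 'I_4 := @Ordinal 4 3 isT.

Lemma ord4_cases (P : 'I_4 -> Prop) : P a0 -> P a1 -> P a2 -> P a3 -> forall p, P p.
Proof. by move=> ? ? ? ? [[|[|[|[|?]]]] lt_p4] //; rewrite (bool_irrelevance lt_p4 isT). Qed.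

Definition edge01 (p q : 'I_4) : bool := [&& p <= 1, q <= 1 & p != q]%N.

Lemma edge01_sym : symmetric edge01.
Proof. by move=> p q; rewrite /edge01 andbCA eq_sym. Qed.

Lemma edge01_irr : irreflexive edge01.
Proof. by move=> p; rewrite /edge01 eqxx !andbF. Qed.

Lemma edge01_functional i j k : edge01 i j -> edge01 i k -> j = k.
Proof.
rewrite /edge01 -!val_eqE /= => /and3P [i1 j1 ij] /and3P [_ k1 ik].
by apply: val_inj => /=; lia.
Qed.

Definition val4 (i p : 'I_4) : rat :=
  ((i == a0) && (p == a0) || (i \in [:: a1; a2]) && (p == a2))%:R.

Definition phi4 (i j : 'I_4) : rat := ((i == a0) && (j == a1))%:R.

Lemma val4_bounds i p : 0 <= val4 i p <= 1.
Proof. by rewrite /val4; case: (_ || _). Qed.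

Lemma phi4_ge0 i j : 0 <= phi4 i j.
Proof. exact: ler0n. Qed.

Definition inst4 : instance 4 := Instance edge01_sym val4_bounds edge01_sym edge01_irr phi4_ge0.

Lemma inst4_max_deg1 : max_deg1 inst4.
Proof. by split; [exact: edge01_functional | exists a0, a1]. Qed.

Definition first_choice (s : state 4) : 'I_4 :=
  if available s a2 then a2 else if available s a1 then a1
  else if available s a0 then a0 else a3.

Definition pref_beh : profile 4 := fun _ s _ => (first_choice s, None).

Lemma first_choice_available (s : state 4) j : s j = None -> available s (first_choice s).
Proof.
case/exists_available=> p; rewrite /first_choice.
case: ifP => // av2; case: ifP => // av1; case: ifP => // av0.
by elim/ord4_cases: p; rewrite ?av0 ?av1 ?av2.
Qed.

Lemma score_neq_a0 (s : state 4) j q : j != a0 -> score inst4 s j q = val4 j q.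
Proof. by move=> j_a0; rewrite /score big1 ?addr0 // => k _; rewrite /= /phi4 (negbTE j_a0) mul0r. Qed.

Lemma pref_beh_greedy j : j != a0 -> greedy inst4 j (pref_beh j).
Proof.
move=> j_a0 s d sj; split; first exact: first_choice_available sj.
move=> q q_av; rewrite !score_neq_a0 // /val4 (negbTE j_a0) ler_nat.
by case: (q =P a2) q_av => [-> a2_av | _ _]; rewrite ?andbF //= /first_choice a2_av eqxx.
Qed.

Definition gain_a0 (A : {ffun 'I_4 -> 'I_4}) : nat := (A a0 == a0) + edge01 (A a0) (A a1).

Lemma U_a0 A : U inst4 A a0 = (gain_a0 A)%:R.
Proof.
rewrite /U (bigD1 a1) //= big1 ?addr0 => [|k /andP [a0k k_a1]].
  by rewrite /val4 /phi4 /= orbF mul1r natrD.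
by move: k_a1; rewrite (edge01_functional a0k (isT : edge01 a0 a1)) eqxx.
Qed.

Lemma enum_ord4 : enum 'I_4 = [:: a0; a1; a2; a3].
Proof. by apply: (inj_map val_inj); rewrite val_enum_ord. Qed.

Lemma available4 (s : state 4) p :
  available s p = [&& s a0 != Some p, s a1 != Some p, s a2 != Some p & s a3 != Some p].
Proof. by rewrite availableE enum_ord4 /= andbT. Qed.

Lemma complete4 (s : state 4) : complete s =
  if [&& s a0 != None, s a1 != None, s a2 != None & s a3 != None]
  then Some [ffun k => odflt k (s k)] else None.
Proof. by rewrite completeE enum_ord4 /= andbT. Qed.

(* [Finite.enum] is locked, so neither [simpl] nor [vm_compute] can decide [available]
   or apply a finfun: runs are evaluated by rewriting with the equations above. *)
Arguments run_aux : simpl never.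
Arguments available : simpl never.
Arguments assign : simpl never.
Arguments complete : simpl never.
Arguments first_choice : simpl never.

Ltac simpl_state := repeat rewrite ?assignE ?ffunE ?available4 ?complete4 /=.

Ltac eval_run := rewrite /outcome enum_ord4;
  repeat (rewrite ?run_aux_draw ?run_aux_pend ?run_aux0; simpl_state; rewrite ?/first_choice; simpl_state).

Definition declare_a2 : strat 4 := fun _ _ => (a0, Some a2).

Definition alloc_id : {ffun 'I_4 -> 'I_4} := [ffun k => k].

Lemma outcome_declare_a2 : outcome (enum 'I_4) (upd pref_beh a0 declare_a2) = Some alloc_id.
Proof. by eval_run; congr Some; apply/ffunP; elim/ord4_cases; rewrite !ffunE. Qed.

Lemma truthful_opening_gain_le1 p d A : d \in [:: None; Some a1] ->
  outcome (enum 'I_4) (upd pref_beh a0 (fun _ _ => (p, d))) = Some A -> (gain_a0 A <= 1)%N.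
Proof.
rewrite !inE => /orP [] /eqP ->; elim/ord4_cases: p; eval_run.
all: by case=> <-; rewrite /gain_a0 !ffunE.
Qed.

Lemma truthful_gain_le1 b : truthful inst4 a0 b ->
  forall A, outcome (enum 'I_4) (upd pref_beh a0 b) = Some A -> (gain_a0 A <= 1)%N.
Proof.
move=> b_truthful A; case opening: (b [ffun=> None] true) => [p d].
have first_a0 : ohead (enum 'I_4) = Some a0 by rewrite enum_ord4.
rewrite (@outcome_upd_first _ _ _ _ b (fun _ _ => (p, d)) first_a0) ?opening //.
apply: truthful_opening_gain_le1; case: d opening => [j|//] /(congr1 snd) /b_truthful.
by move/(edge01_functional (isT : edge01 a0 a1)) <-; rewrite !inE eqxx orbT.
Qed.

Theorem proposition4p5 :
  exists (n : nat) (I : instance n), max_deg1 I /\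
  exists (ord : seq 'I_n), perm_eq ord (enum 'I_n) /\
  exists (i : 'I_n) (beh : profile n),
    (forall j, j != i -> truthful I j (beh j) /\ greedy I j (beh j)) /\
    exists (dev : strat n) (Adev : {ffun 'I_n -> 'I_n}),
      outcome ord (upd beh i dev) = Some Adev /\
      ~ truthful I i dev /\
      forall (b : strat n), truthful I i b ->
        forall A, outcome ord (upd beh i b) = Some A -> U I A i < U I Adev i.
Proof.
exists 4%N, inst4; split; first exact: inst4_max_deg1.
exists (enum 'I_4); split; first exact: perm_refl.
exists a0, pref_beh; split.
  by move=> j j_a0; split; [move=> s k | exact: pref_beh_greedy].
exists declare_a2, alloc_id; split; first exact: outcome_declare_a2.
split; first by move/(_ [ffun=> None] a2 erefl).
have gain_alloc_id : gain_a0 alloc_id = 2%N by rewrite /gain_a0 !ffunE.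
move=> b b_truthful A outcome_b; rewrite !U_a0 ltr_nat gain_alloc_id ltnS.
exact: truthful_gain_le1 outcome_b.
Qed.
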